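(* Let $q=r^2$ where $r$ is a prime power, and let $s\le l$ be positive integers. Let $C_1,C_2,\dots,C_s$ be linear codes of the same length $m$ over $\mathbb{F}_q$ and let $A\in M_{s,l}(\mathbb{F}_q)$. If $AA^\dagger$ is anti-diagonal (i.e., its only possibly nonzero entries are in positions $(i,s-i+1)$) and $C_i\subseteq C_{s-i+1}^{\perp_H}$ for all $1\le i\le s$, then the matrix-product code $C_A=[C_1,\dots,C_s]\cdot A$ satisfies $C_A\subseteq C_A^{\perp_H}$.
   Context: For $a\in\mathbb{F}_q$, $\overline{a}:=a^r$. For a matrix $A=[a_{ij}]$ over $\mathbb{F}_q$, $A^\dagger:=[\overline{a_{ji}}]$. The Hermitian inner product on $\mathbb{F}_q^n$ is $\langle u,v\rangle_H=\sum_{i} u_i\overline{v_i}$, and $C^{\perp_H}$ is the dual of $C$ with respect to it. $M_{s,l}(\mathbb{F}_q)$ is the set of $s\times l$ matrices over $\mathbb{F}_q$. If $C_i$ has generator matrix $G_i$ and $A=[a_{ij}]\in M_{s,l}(\mathbb{F}_q)$, the matrix-product code $[C_1,\dots,C_s]\cdot A$ is the linear code of length $ml$ generated by the block matrix whose $(i,j)$ block is $a_{ij}G_i$. *)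

From HB Require Import structures.
From mathcomp Require Import all_boot all_order all_algebra all_field.
Set Implicit Arguments. Unset Strict Implicit. Unset Printing Implicit Defensive.
Import GRing.Theory.
Local Open Scope ring_scope.

Definition prime_power (r : nat) : Prop :=
  exists p k : nat, prime p /\ (0 < k)%N /\ r = (p ^ k)%N.

Section Defs.
Variables (F : finFieldType) (r : nat).

Definition hconj (a : F) : F := a ^+ r.

Definition hadj (s l : nat) (A : 'M[F]_(s, l)) : 'M[F]_(l, s) :=
  \matrix_(i, j) hconj (A j i).

Definition hip (n : nat) (u v : 'rV[F]_n) : F :=
  \sum_(i < n) u 0 i * hconj (v 0 i).

Definition herm_dual (n : nat) (S : {set 'rV[F]_n}) : {set 'rV[F]_n} :=
  [set u | [forall v in S, hip u v == 0]].

Definition anti_diag (s : nat) (M : 'M[F]_s) : Prop :=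
  forall i j : 'I_s, (i + j)%N != s.-1 -> M i j = 0.

Definition code_set (m : nat) (C : {vspace 'rV[F]_m}) : {set 'rV[F]_m} :=
  [set x | x \in C].

(* Block j occupies coordinates j*m .. j*m+m-1 (mxvec is row-major). *)
Definition mp_word (s l m : nat) (A : 'M[F]_(s, l)) (c : 'I_s -> 'rV[F]_m)
  : 'rV[F]_(l * m) :=
  mxvec (\matrix_(j < l, t < m) \sum_(i < s) A i j * c i 0 t).

Definition mp_code (s l m : nat) (C : 'I_s -> {vspace 'rV[F]_m})
  (A : 'M[F]_(s, l)) : {set 'rV[F]_(l * m)} :=
  [set x | [exists c : {ffun 'I_s -> 'rV[F]_m},
             [forall i, c i \in C i] && (x == mp_word A c)]].
End Defs.

(* Since r is a power of the characteristic, a |-> a^r is a ring morphism of F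
   (a power of the Frobenius), so the Hermitian product is sesquilinear.  The
   j-th block of [c_1,...,c_s].A is sum_i a_ij c_i, hence the Hermitian product
   of [c_1,...,c_s].A and [d_1,...,d_s].A is sum_(i,j) (A A^dagger)_ij <c_i, d_j>_H.
   Anti-diagonality of A A^dagger leaves only the terms j = s+1-i, and these
   vanish because C_i is Hermitian-orthogonal to C_(s+1-i). *)

From HB Require Import structures.
From mathcomp Require Import all_boot all_order all_algebra all_field.
From mathcomp Require Import zify.
Import GRing.Theory.
Local Open Scope ring_scope.

Lemma sum_mxvec (V : nmodType) (l m : nat) (f : 'I_(l * m) -> V) :
  \sum_k f k = \sum_(j < l) \sum_(t < m) f (mxvec_index j t).
Proof.
rewrite pair_bigA /= (reindex (uncurry (@mxvec_index l m)) (curry_mxvec_bij l m)).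
by apply: eq_bigr => -[].
Qed.

Lemma hip_mxvec (F : finFieldType) (r l m : nat) (U V : 'M[F]_(l, m)) :
  hip r (mxvec U) (mxvec V) = \sum_(j < l) hip r (row j U) (row j V).
Proof.
rewrite /hip sum_mxvec; apply: eq_bigr => j _; apply: eq_bigr => t _.
by rewrite !mxvecE !mxE.
Qed.

Lemma hip_suml (F : finFieldType) (r n : nat) (I : finType) (a : I -> F)
    (u : I -> 'rV[F]_n) (v : 'rV[F]_n) :
  hip r (\sum_i a i *: u i) v = \sum_i a i * hip r (u i) v.
Proof.
rewrite /hip; under eq_bigr => t _ do rewrite summxE mulr_suml.
rewrite exchange_big; apply: eq_bigr => i _.
by rewrite mulr_sumr; apply: eq_bigr => t _; rewrite mxE mulrA.
Qed.

Lemma mp_wordE (F : finFieldType) (s l m : nat) (A : 'M[F]_(s, l))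
    (c : 'I_s -> 'rV[F]_m) :
  mp_word A c = mxvec (\matrix_(j < l) \sum_i A i j *: c i).
Proof.
congr mxvec; apply/matrixP => j t; rewrite !mxE summxE.
by apply: eq_bigr => i _; rewrite mxE.
Qed.

Section FrobeniusConjugation.

Variables (F : finFieldType) (p k : nat).
Hypothesis charFp : p \in [pchar F].

Lemma hconjD (a b : F) : hconj (p ^ k) (a + b) = hconj (p ^ k) a + hconj (p ^ k) b.
Proof. by rewrite /hconj exprDn_pchar // pnatX pnatE ?charFp ?(pcharf_prime charFp). Qed.

Lemma hconjM (a b : F) : hconj (p ^ k) (a * b) = hconj (p ^ k) a * hconj (p ^ k) b.
Proof. exact: exprMn. Qed.

Lemma hconj0 : hconj (p ^ k) (0 : F) = 0.
Proof. by rewrite /hconj expr0n expn_eq0 eqn0Ngt prime_gt0 ?(pcharf_prime charFp). Qed.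

Lemma hconj_sum (I : finType) (f : I -> F) :
  hconj (p ^ k) (\sum_i f i) = \sum_i hconj (p ^ k) (f i).
Proof. exact: (big_morph _ hconjD hconj0). Qed.

Lemma hip_sumr (n : nat) (I : finType) (b : I -> F) (u : 'rV[F]_n)
    (v : I -> 'rV[F]_n) :
  hip (p ^ k) u (\sum_i b i *: v i) = \sum_i hconj (p ^ k) (b i) * hip (p ^ k) u (v i).
Proof.
rewrite /hip; under eq_bigr => t _ do rewrite summxE hconj_sum mulr_sumr.
rewrite exchange_big; apply: eq_bigr => i _.
by rewrite mulr_sumr; apply: eq_bigr => t _; rewrite mxE hconjM mulrCA.
Qed.

Lemma hip_mp_word (s l m : nat) (A : 'M[F]_(s, l)) (c d : 'I_s -> 'rV[F]_m) :
  hip (p ^ k) (mp_word A c) (mp_word A d) =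
  \sum_(i < s) \sum_(j < s) (A *m hadj (p ^ k) A) i j * hip (p ^ k) (c i) (d j).
Proof.
rewrite !mp_wordE hip_mxvec.
under eq_bigr => q _ do rewrite !rowK hip_suml.
under eq_bigr => q _ do under eq_bigr => i _ do rewrite hip_sumr mulr_sumr.
rewrite exchange_big; apply: eq_bigr => i _; rewrite exchange_big.
apply: eq_bigr => j _; rewrite !mxE mulr_suml; apply: eq_bigr => q _.
by rewrite !mxE mulrA.
Qed.

End FrobeniusConjugation.

Lemma mp_codeP (F : finFieldType) (s l m : nat) (C : 'I_s -> {vspace 'rV[F]_m})
    (A : 'M[F]_(s, l)) (x : 'rV[F]_(l * m)) :
  reflect (exists2 c : 'I_s -> 'rV[F]_m, forall i, c i \in C i & x = mp_word A c)
          (x \in mp_code C A).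
Proof.
rewrite inE; apply: (iffP existsP) => [[c /andP[/forallP Cc /eqP ->]] | [c Cc ->]].
  by exists c.
exists (finfun c); apply/andP; split; first by apply/forallP => i; rewrite ffunE.
rewrite !mp_wordE; apply/eqP; congr mxvec; apply/row_matrixP => j.
by rewrite !rowK; apply: eq_bigr => i _; rewrite ffunE.
Qed.

Lemma anti_diag_rev_ord (F : finFieldType) (s : nat) (M : 'M[F]_s) (i j : 'I_s) :
  anti_diag M -> j != rev_ord i -> M i j = 0.
Proof.
move=> antiM ne_j; apply: antiM; apply: contra ne_j => /eqP sum_ij.
apply/eqP/val_inj => /=; lia.
Qed.

Lemma anti_diag_pairing_eq0 (F : finFieldType) (s : nat) (M : 'M[F]_s)
    (f : 'I_s -> 'I_s -> F) :
  anti_diag M -> (forall i, f i (rev_ord i) = 0) ->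
  \sum_(i < s) \sum_(j < s) M i j * f i j = 0.
Proof.
move=> antiM f_rev; apply: big1 => i _; apply: big1 => j _.
have [->|ne_j] := eqVneq j (rev_ord i); first by rewrite f_rev mulr0.
by rewrite anti_diag_rev_ord ?mul0r.
Qed.

Theorem theorem3p2 (F : finFieldType) (r s l m : nat)
  (C : 'I_s -> {vspace 'rV[F]_m}) (A : 'M[F]_(s, l)) :
  prime_power r -> #|F| = (r ^ 2)%N ->
  (0 < s)%N -> (s <= l)%N ->
  anti_diag (A *m hadj r A) ->
  (forall i : 'I_s,
     code_set (C i) \subset herm_dual r (code_set (C (rev_ord i)))) ->
  mp_code C A \subset herm_dual r (mp_code C A).
Proof.
move=> [p [k [p_pr [_ ->]]]] cardF _ _ antiAA orthC.
have charFp : p \in [pchar F].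
  by apply: (@card_finPcharP F p (k * 2)); rewrite // cardF expnM.
apply/subsetP => _ /mp_codeP[c Cc ->]; rewrite inE.
apply/forall_inP => _ /mp_codeP[d Cd ->].
rewrite hip_mp_word //; apply/eqP/anti_diag_pairing_eq0 => // i.
have /subsetP/(_ (c i)) := orthC i; rewrite !inE => /(_ (Cc i)).
by move=> /forall_inP/(_ (d (rev_ord i))); rewrite inE Cd => /(_ isT)/eqP.
Qed.
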